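(* Let $L$ be a finite language over a $k$-letter alphabet accepted by a layered NFA of width $\omega$ and length $n$ with $f$ final states. Then $L$ can be described by a regular expression of length $\mathrm{rpn}(L) \leq O\big( f k n \omega \cdot \omega^{\log n} \big)$.
   Context: An NFA for a finite language is layered if its set of states admits a partition $Q_0\cup Q_1\cup\dots\cup Q_n$ such that every word of length $j$ leads (from the initial state) only to states in $Q_j$; $Q_j$ is the $j$-th layer. Its width is $\omega=\max_{0\le j\le n}|Q_j|$ and its length is the length $n$ of its longest path. Regular expressions are built from $\epsilon$ and letters by union and concatenation; $\mathrm{rpn}(R)$ is the number of nodes in the syntax tree of $R$, and $\mathrm{rpn}(L)$ is the minimum over expressions describing $L$. Logarithms are base 2; the constant in $O(\cdot)$ is absolute. *)

From mathcomp Require Import all_boot.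
From Stdlib Require Import Reals.

Set Implicit Arguments.
Unset Strict Implicit.
Unset Printing Implicit Defensive.

Fixpoint runs (k : nat) (Q : finType) (delta : Q -> 'I_k -> Q -> bool)
    (p : Q) (w : seq 'I_k) (q : Q) : bool :=
  match w with
  | [::] => p == q
  | a :: w' => [exists r, delta p a r && runs delta r w' q]
  end.

Definition accepts (k : nat) (Q : finType) (delta : Q -> 'I_k -> Q -> bool)
    (q0 : Q) (F : {set Q}) (w : seq 'I_k) : bool :=
  [exists q in F, runs delta q0 w q].

Definition longest_path_length (k : nat) (Q : finType)
    (delta : Q -> 'I_k -> Q -> bool) (q0 : Q) (n : nat) : Prop :=
  (exists w q, size w = n /\ runs delta q0 w q) /\
  (forall w q, runs delta q0 w q -> size w <= n).

(* lay : Q -> 'I_n.+1 is a partition Q_0 u ... u Q_n (Q_j = lay^-1 j)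
   such that every word of length j leads from q0 only to states of Q_j *)
Definition layered_by (k : nat) (Q : finType) (delta : Q -> 'I_k -> Q -> bool)
    (q0 : Q) (n : nat) (lay : Q -> 'I_n.+1) : Prop :=
  forall w q, runs delta q0 w q -> nat_of_ord (lay q) = size w.

Definition width (Q : finType) (n : nat) (lay : Q -> 'I_n.+1) : nat :=
  \max_(j < n.+1) #|[set q | lay q == j]|.

Inductive regex (k : nat) : Type :=
  | REps : regex k
  | RLet : 'I_k -> regex k
  | RUnion : regex k -> regex k -> regex k
  | RCat : regex k -> regex k -> regex k.

Fixpoint matches (k : nat) (r : regex k) (w : seq 'I_k) : Prop :=
  match r with
  | REps => w = [::]
  | RLet a => w = [:: a]
  | RUnion r1 r2 => matches r1 w \/ matches r2 w
  | RCat r1 r2 => exists u v, w = u ++ v /\ matches r1 u /\ matches r2 v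
  end.

Fixpoint rpn (k : nat) (r : regex k) : nat :=
  match r with
  | REps => 1
  | RLet _ => 1
  | RUnion r1 r2 => (rpn r1 + rpn r2).+1
  | RCat r1 r2 => (rpn r1 + rpn r2).+1
  end.

Definition rpn_bound (f k n w : nat) : R :=
  (INR (f * k * n * w) * Rpower (INR w) (ln (INR n) / ln 2))%R.

From mathcomp Require Import all_boot zify.
From Stdlib Require Import Reals Lra.
(* Reals rebinds [^] on nat to [Nat.pow]; this restores [expn]. *)
Import ssrnat.

(* Divide and conquer on path length.  Words of length l from p to q are
   described by splitting every run at its midpoint: the state s reached after
   l/2 letters lies in one fixed layer, which has at most omega states, so
   E(l, p, q) = U_s E(l/2, p, s) E(l - l/2, s, q) with at most omega terms.
   Unfolding the recursion 1 + log n times multiplies the size by (2 omega)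
   at each level, which gives the bound k n omega * omega^(log n) for each
   final state. *)

Section OptionRegex.
Variable k : nat.

(* [None] stands for the empty language, which has no regular expression. *)
Definition omatches (x : option (regex k)) (w : seq 'I_k) : Prop :=
  if x is Some r then matches r w else False.

Definition osize (x : option (regex k)) : nat :=
  if x is Some r then rpn r else 0.

Definition ounion (x y : option (regex k)) : option (regex k) :=
  match x, y with
  | None, _ => y
  | _, None => x
  | Some r1, Some r2 => Some (RUnion r1 r2)
  end.

Definition ocat (x y : option (regex k)) : option (regex k) :=
  match x, y with
  | Some r1, Some r2 => Some (RCat r1 r2)
  | _, _ => None
  end.

Definition big_ounion {T : Type} (s : seq T) (g : T -> option (regex k)) :=
  foldr (fun t acc => ounion (g t) acc) None s.

Lemma ounionP x y w : omatches (ounion x y) w <-> omatches x w \/ omatches y w.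
Proof. by case: x => [r1|]; case: y => [r2|] /=; tauto. Qed.

Lemma ocatP x y w :
  omatches (ocat x y) w <->
  exists u v, w = u ++ v /\ omatches x u /\ omatches y v.
Proof.
case: x => [r1|]; case: y => [r2|] //=; split=> //; by case=> u [v] [_] [].
Qed.

Lemma osize_ounion x y : osize (ounion x y) <= osize x + osize y + 1.
Proof. by case: x => [r1|]; case: y => [r2|] /=; lia. Qed.

Lemma osize_ocat x y : osize (ocat x y) <= osize x + osize y + 1.
Proof. by case: x => [r1|]; case: y => [r2|] /=; lia. Qed.

Lemma big_ounionP (T : eqType) (s : seq T) g w :
  omatches (big_ounion s g) w <-> exists2 t, t \in s & omatches (g t) w.
Proof.
elim: s => [|a s IH] /=; first by split=> // [[]].
rewrite ounionP IH; split=> [[gaw|[t ts gtw]]|[t]].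
- by exists a; rewrite ?mem_head.
- by exists t; rewrite // in_cons ts orbT.
- by rewrite in_cons => /orP[/eqP-> | ts gtw]; [left | right; exists t].
Qed.

Lemma osize_big_ounion (T : eqType) (s : seq T) g M :
  (forall t, t \in s -> osize (g t) <= M) ->
  osize (big_ounion s g) <= size s * M.+1.
Proof.
elim: s => [|a s IH] //= gM.
have := osize_ounion (g a) (big_ounion s g).
have := gM a (mem_head _ _).
have : osize (big_ounion s g) <= size s * M.+1.
  by apply: IH => t ts; apply: gM; rewrite in_cons ts orbT.
by rewrite mulSn; lia.
Qed.

End OptionRegex.

Arguments omatches {k}.
Arguments osize {k}.
Arguments ocat {k}.
Arguments osize_ocat {k}.
Arguments big_ounion {k T}.
Arguments osize_big_ounion {k T s g M}.

Section PathExpressions.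
Variables (k : nat) (Q : finType) (delta : Q -> 'I_k -> Q -> bool).
Variable layer : Q -> nat.

Lemma runs1 p a q : runs delta p [:: a] q = delta p a q.
Proof.
apply/existsP/idP => [[r /andP[par /eqP <-]] // | paq].
by exists q; rewrite paq eqxx.
Qed.

Lemma runs_cat p u v q :
  runs delta p (u ++ v) q = [exists s, runs delta p u s && runs delta s v q].
Proof.
elim: u p => [|a u IH] p /=.
  apply/idP/existsP => [pvq | [s /andP[/eqP <- //]]].
  by exists p; rewrite eqxx.
apply/existsP/existsP => [[r /andP[par]] | [s /andP[/existsP[r /andP[par rus]] svq]]].
  rewrite IH => /existsP[s /andP[rus svq]].
  by exists s; rewrite svq andbT; apply/existsP; exists r; rewrite par rus.
by exists r; rewrite par IH; apply/existsP; exists s; rewrite rus svq.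
Qed.

Definition letters_re (p q : Q) : option (regex k) :=
  big_ounion (enum [pred a | delta p a q]) (fun a => Some (RLet a)).

Lemma letters_reP p q w :
  omatches (letters_re p q) w <-> size w = 1 /\ runs delta p w q.
Proof.
rewrite big_ounionP; split=> [[a] | []].
  by rewrite mem_enum => paq /= ->; rewrite runs1.
case: w => [|a [|]] // _; rewrite runs1 => paq.
by exists a; rewrite ?mem_enum.
Qed.

Lemma osize_letters_re p q : osize (letters_re p q) <= 2 * k.
Proof.
apply: leq_trans (osize_big_ounion (M := 1) _) _ => //.
by rewrite -cardE mulnC leq_mul2l /=; apply: leq_trans (max_card _) _; rewrite card_ord.
Qed.

(* [paths_re d l p q] describes the words of length [l] leading from [p] to
   [q], provided [l <= 2 ^ d] and [p] is reachable. *)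
Fixpoint paths_re (d l : nat) (p q : Q) {struct d} : option (regex k) :=
  match l, d with
  | 0, _ => if p == q then Some (REps k) else None
  | 1, _ => letters_re p q
  | _, 0 => None
  | _, d.+1 =>
      big_ounion (enum [pred s | layer s == layer p + l./2])
        (fun s => ocat (paths_re d l./2 p s) (paths_re d (l - l./2) s q))
  end.

Lemma paths_re0 d p q w :
  omatches (paths_re d 0 p q) w <-> size w = 0 /\ runs delta p w q.
Proof.
by case: d => [|d] /=; case: eqP => [<- | neq_pq] /=;
  split=> [|[]]; case: w => //= _ /eqP.
Qed.

Lemma paths_re1 d p q w :
  omatches (paths_re d 1 p q) w <-> size w = 1 /\ runs delta p w q.
Proof. by case: d => [|d]; apply: letters_reP. Qed.

Lemma paths_reS d l p q : 1 < l ->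
  paths_re d.+1 l p q =
  big_ounion (enum [pred s | layer s == layer p + l./2])
    (fun s => ocat (paths_re d l./2 p s) (paths_re d (l - l./2) s q)).
Proof. by case: l => [|[|l]]. Qed.

Lemma paths_re_small d l p q : l < 2 -> osize (paths_re d l p q) <= 2 * k + 1.
Proof.
have := osize_letters_re p q.
by case: d => [|d]; case: l => [|[|l]] //= ? _; try case: eqP => _ /=; lia.
Qed.

Lemma paths_re_sound d l p q w :
  omatches (paths_re d l p q) w -> size w = l /\ runs delta p w q.
Proof.
elim: d l p q w => [|d IH] l p q w; case: (ltnP l 2) => [|l_large];
  try by case: l => [|[|l]] // _; [move/paths_re0 | move/paths_re1].
  by case: l l_large => [|[|l]] // _ [].
rewrite paths_reS // => /big_ounionP[s _ /ocatP[u [v [-> [/IH[su pus] /IH[sv svq]]]]]].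
rewrite size_cat su sv runs_cat; split; first lia.
by apply/existsP; exists s; rewrite pus svq.
Qed.

Variable q0 : Q.
Hypothesis layered : forall w q, runs delta q0 w q -> layer q = size w.

Lemma paths_re_complete d u p q w :
  runs delta q0 u p -> size w <= 2 ^ d -> runs delta p w q ->
  omatches (paths_re d (size w) p q) w.
Proof.
elim: d u p q w => [|d IH] u p q w q0up le_w pwq;
  case: (ltnP (size w) 2) => [w_small | w_large];
  try by case: w w_small pwq {le_w} => [|a [|]] // _ pwq;
    [apply/paths_re0 | apply/paths_re1].
  by rewrite expn0 in le_w; lia.
set m := (size w)./2.
have size_w1 : size (take m w) = m by rewrite size_takel // /m; lia.
have size_w2 : size (drop m w) = size w - m by rewrite size_drop.
move: pwq; rewrite -{1}(cat_take_drop m w) runs_cat => /existsP[s /andP[pus svq]].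
have q0us : runs delta q0 (u ++ take m w) s.
  by rewrite runs_cat; apply/existsP; exists p; rewrite q0up pus.
rewrite paths_reS //; apply/big_ounionP; exists s.
  by rewrite mem_enum inE (layered _ _ q0us) (layered _ _ q0up) size_cat size_w1.
apply/ocatP; exists (take m w), (drop m w); split; first by rewrite cat_take_drop.
have le_w1 : m <= 2 ^ d by rewrite expnS /m in le_w *; lia.
have le_w2 : size w - m <= 2 ^ d by rewrite expnS /m in le_w *; lia.
split; first by have := IH _ _ _ _ q0up _ pus; rewrite size_w1; apply.
by have := IH _ _ _ _ q0us _ svq; rewrite size_w2; apply.
Qed.

Variable omega : nat.
Hypothesis card_layer_le : forall j, #|[pred s | layer s == j]| <= omega.

Lemma omega_gt0 : 0 < omega.
Proof.
apply: leq_trans (card_layer_le (layer q0)).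
by apply/card_gt0P; exists q0; rewrite inE.
Qed.

(* The slack [+ 2] absorbs the union and concatenation nodes added at each
   level of the recursion. *)
Lemma paths_re_size d l p q :
  osize (paths_re d l p q) + 2 <= (2 * k + 3) * (2 * omega) ^ d.
Proof.
have le_c d' : 2 * k + 3 <= (2 * k + 3) * (2 * omega) ^ d'.
  by rewrite leq_pmulr // expn_gt0 muln_gt0 omega_gt0.
elim: d l p q => [|d IH] l p q; case: (ltnP l 2) => [l_small | l_large].
- by have := paths_re_small 0 _ p q l_small; rewrite expn0 muln1; lia.
- by case: l l_large => [|[|l]] // _ /=; rewrite expn0; lia.
- by have := paths_re_small d.+1 _ p q l_small; have := le_c d.+1; lia.
set B := (2 * k + 3) * (2 * omega) ^ d.
have le_cat s : osize (ocat (paths_re d l./2 p s) (paths_re d (l - l./2) s q)) <= 2 * B - 3.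
  by have := osize_ocat (paths_re d l./2 p s) (paths_re d (l - l./2) s q);
    have := IH l./2 p s; have := IH (l - l./2) s q; lia.
rewrite paths_reS //.
apply: leq_trans (leq_add (osize_big_ounion (fun s _ => le_cat s)) (leqnn 2)) _.
have B_ge2 : 2 <= B by have := IH 0 p p; lia.
have -> : (2 * B - 3).+1 = 2 * B - 2 by lia.
rewrite -cardE expnS mulnCA -/B.
apply: leq_trans (leq_add (leq_mul (card_layer_le _) (leqnn _)) (leqnn 2)) _.
have := leq_mul (leqnn omega) B_ge2; have := omega_gt0.
rewrite mulnBr; lia.
Qed.

Definition accepting_re d (F : {set Q}) : option (regex k) :=
  big_ounion (enum F) (fun q => paths_re d (layer q) q0 q).

Lemma accepting_reP d F w :
  (forall u q, runs delta q0 u q -> size u <= 2 ^ d) ->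
  omatches (accepting_re d F) w <-> accepts delta q0 F w.
Proof.
move=> short_runs; rewrite big_ounionP.
split=> [[q] | /existsP[q /andP[qF q0wq]]].
  by rewrite mem_enum => qF /paths_re_sound[_ q0wq]; apply/existsP; exists q; rewrite qF.
exists q; first by rewrite mem_enum.
have q0_start : runs delta q0 [::] q0 := eqxx q0.
rewrite (layered _ _ q0wq).
exact: paths_re_complete q0_start (short_runs _ _ q0wq) q0wq.
Qed.

Lemma osize_accepting_re d F :
  osize (accepting_re d F) <= #|F| * ((2 * k + 3) * (2 * omega) ^ d).
Proof.
rewrite cardE; apply: leq_trans (osize_big_ounion (M := (2 * k + 3) * (2 * omega) ^ d - 2) _) _.
  by move=> q _; have := paths_re_size d (layer q) q0 q; lia.
by rewrite leq_mul2l; have := paths_re_size d 0 q0 q0; lia.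
Qed.

End PathExpressions.

Arguments accepting_re {k Q} delta layer q0 d F.
Arguments accepting_reP {k Q delta layer q0} layered d F w.
Arguments osize_accepting_re {k Q} delta {layer q0 omega} card_layer_le d F.
Arguments omega_gt0 {Q layer} q0 {omega} card_layer_le.

Lemma card_layer_le_width {Q : finType} {n} (lay : Q -> 'I_n.+1) j :
  #|[pred s | val (lay s) == j]| <= width lay.
Proof.
case: (ltnP j n.+1) => [lt_jn | le_nj].
  have -> : #|[pred s | val (lay s) == j]| = #|[set q | lay q == Ordinal lt_jn]|.
    by apply: eq_card => s; rewrite !inE.
  exact: (leq_bigmax (F := fun i : 'I_n.+1 => #|[set q | lay q == i]|)).
rewrite (eq_card0 (A := [pred s | val (lay s) == j])) // => s /=.
by apply/negbTE; rewrite neq_ltn (leq_trans (ltn_ord _) le_nj).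
Qed.

Lemma paths_re_bound_le k n omega t : 0 < k -> 2 ^ t <= n ->
  (2 * k + 3) * (2 * omega) ^ t.+1 <= 10 * (k * n * omega) * omega ^ t.
Proof.
move=> k_gt0 le_tn; rewrite expnS expnMn.
have le_c : 2 * k + 3 <= 5 * k by lia.
apply: leq_trans (leq_mul le_c (leq_mul (leqnn _) (leq_mul le_tn (leqnn _)))) _.
lia.
Qed.

Lemma INR_expn a t : INR (a ^ t) = (INR a ^ t)%R.
Proof. by elim: t => [|t IH] //; rewrite expnS mult_INR IH. Qed.

Lemma pow_le_Rpower_log2 (x : R) n t : (1 <= x)%R -> 2 ^ t <= n ->
  (x ^ t <= Rpower x (ln (INR n) / ln 2))%R.
Proof.
move=> x_ge1 le_tn.
have ln2_gt0 : (0 < ln 2)%R by rewrite -ln_1; apply: ln_increasing; lra.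
have le_tn_R : (2 ^ t <= INR n)%R.
  by rewrite -[2%R]/(INR 2) -INR_expn; apply/le_INR/leP.
have le_ln : (INR t * ln 2 <= ln (INR n))%R.
  rewrite -ln_pow; last lra.
  case: (Rle_lt_or_eq_dec _ _ le_tn_R) => [lt|->]; last exact: Rle_refl.
  by apply/Rlt_le/ln_increasing => //; apply: pow_lt; lra.
rewrite -Rpower_pow; last lra.
apply: Rle_Rpower => //.
by apply: (Rmult_le_reg_r (ln 2)) => //; rewrite /Rdiv Rmult_assoc Rinv_l; lra.
Qed.

Lemma le_rpn_bound c f k n omega t m : 0 < omega -> 2 ^ t <= n ->
  m <= c * (f * k * n * omega) * omega ^ t ->
  (INR m <= INR c * rpn_bound f k n omega)%R.
Proof.
move=> omega_gt0 le_tn /leP/le_INR le_m.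
apply: Rle_trans le_m _.
have omega_ge1 : (1 <= INR omega)%R by apply/(le_INR 1)/leP.
have le_pow := pow_le_Rpower_log2 _ _ _ omega_ge1 le_tn.
rewrite /rpn_bound !mult_INR INR_expn Rmult_assoc.
apply: Rmult_le_compat_l; first exact: pos_INR.
apply: Rmult_le_compat_l => //.
by rewrite -!mult_INR; apply: pos_INR.
Qed.

Theorem proposition3p2 :
  exists C : R,
  forall (k : nat) (Q : finType) (q0 : Q) (delta : Q -> 'I_k -> Q -> bool)
         (F : {set Q}) (n : nat) (lay : Q -> 'I_n.+1),
    0 < k ->
    0 < n ->
    (exists w, accepts delta q0 F w) ->
    longest_path_length delta q0 n ->
    layered_by delta q0 lay ->
    exists r : regex k,
      (forall w, matches r w <-> accepts delta q0 F w) /\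
      (INR (rpn r) <= C * rpn_bound #|F| k n (width lay))%R.
Proof.
exists (INR 10) => k Q q0 delta F n lay k_gt0 n_gt0 [w0 q0w0] _ layered.
have card_le := card_layer_le_width lay.
set t := trunc_log 2 n.
have le_tn : 2 ^ t <= n by apply: trunc_logP.
have short_runs u q : runs delta q0 u q -> size u <= 2 ^ t.+1.
  move=> /layered <-; have := trunc_log_ltn n (isT : 1 < 2).
  by have := ltn_ord (lay q); rewrite -/t; lia.
pose layer q := val (lay q).
have accP := accepting_reP layered t.+1 F _ short_runs.
have [r def_r] : exists r, accepting_re delta layer q0 t.+1 F = Some r.
  by case: accepting_re accP => [r|/(_ w0)/iffRL/(_ q0w0)//]; exists r.
exists r; split; first by move=> w; rewrite -accP def_r.
have size_r : rpn r <= 10 * (#|F| * k * n * width lay) * width lay ^ t.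
  rewrite -[rpn r]/(osize (Some r)) -def_r.
  apply: leq_trans (osize_accepting_re delta card_le t.+1 F) _.
  by have := leq_mul (leqnn #|F|) (paths_re_bound_le k n (width lay) t k_gt0 le_tn); lia.
exact: le_rpn_bound _ _ _ _ _ _ _ (omega_gt0 q0 card_le) le_tn size_r.
Qed.
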